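(* In the splitting setting (see context), define for $a,b\in\Gamma(E_1)$, $\alpha,\beta\in\Gamma(E_2)$: $R^{\to}(a,b)\alpha:=\nabla^{\to}_a\nabla^{\to}_b\alpha-\nabla^{\to}_b\nabla^{\to}_a\alpha-\nabla^{\to}_{a\diamond_1b}\alpha$ and $R^{\leftarrow}(\alpha,\beta)a:=\nabla^{\leftarrow}_\alpha\nabla^{\leftarrow}_\beta a-\nabla^{\leftarrow}_\beta\nabla^{\leftarrow}_\alpha a-\nabla^{\leftarrow}_{\alpha\diamond_2\beta}a$. Then $R^{\to}(a,b)\alpha$ is $C^\infty(M)$-linear in each of $a,b,\alpha$, skew-symmetric in $(a,b)$, and for fixed $a,b$ the endomorphism $R^{\to}(a,b)$ of $E_2$ is skew-symmetric with respect to $\langle\cdot,\cdot\rangle_2$; i.e. $R^{\to}$ is a section of $\wedge^2E_1^*\otimes\mathfrak o(E_2)\cong\wedge^2E_1^*\otimes\wedge^2E_2^*$. Analogously $R^{\leftarrow}$ is a section of $\wedge^2E_2^*\otimes\mathfrak o(E_1)\cong\wedge^2E_2^*\otimes\wedge^2E_1^*$. Here $\mathfrak o(V)$ denotes the bundle of endomorphisms of $V$ that are skew-symmetric for the given fiberwise metric.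
   Context: A (real) Courant algebroid is a real vector bundle $E\to M$ with a symmetric nondegenerate fiberwise bilinear form $\langle\cdot,\cdot\rangle$, an $\mathbb R$-bilinear bracket $\diamond$ on $\Gamma(E)$ and a bundle map $\rho:E\to TM$ such that for all $\phi,\phi_1,\phi_2,\phi'\in\Gamma(E)$, $f\in C^\infty(M)$: (J) $\phi\diamond(\phi_1\diamond\phi_2)=\phi_1\diamond(\phi\diamond\phi_2)+(\phi\diamond\phi_1)\diamond\phi_2$; (L) $\phi\diamond(f\phi')=(\rho(\phi)f)\phi'+f(\phi\diamond\phi')$; (S) $\phi\diamond\phi=\tfrac12 D\langle\phi,\phi\rangle$; (I) $\rho(\phi)\langle\phi',\phi'\rangle=2\langle\phi\diamond\phi',\phi'\rangle$, where $\langle Df,\phi\rangle=\rho(\phi)f$. Splitting setting: $E$ is a Courant algebroid, $E=E_1\oplus E_2$ with $E_2=E_1^\perp$; $\iota_k$, $\mathrm{pr}_k$ the inclusions/projections; each $E_k$ is a Courant algebroid with anchor $\rho_k=\rho\circ\iota_k$, pairing $\langle a,b\rangle_k=\langle\iota_ka,\iota_kb\rangle$, bracket $a\diamond_kb=\mathrm{pr}_k(\iota_ka\diamond\iota_kb)$. Define $\nabla^{\to}_a\beta:=\mathrm{pr}_2(\iota_1a\diamond\iota_2\beta)$ and $\nabla^{\leftarrow}_\beta a:=\mathrm{pr}_1(\iota_2\beta\diamond\iota_1a)$ for $a\in\Gamma(E_1)$, $\beta\in\Gamma(E_2)$. *)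

(* Algebraic (Serre--Swan) model of Courant algebroids:
   C   : the algebra C^oo(M) of smooth functions, an algebra over the reals K,
   V   : the C-module Gamma(E) of smooth sections of E,
   rho : the anchor, a C-linear map from sections to K-linear derivations of C
         (vector fields = derivations of C^oo(M)). *)
From HB Require Import structures.
From mathcomp Require Import all_boot all_order all_algebra.
Set Implicit Arguments. Unset Strict Implicit. Unset Printing Implicit Defensive.
Import Order.TTheory GRing.Theory Num.Theory.
Local Open Scope ring_scope.

Section Courant.
Variables (K : numFieldType) (C : comAlgType K).

Definition Clinear (U W : lmodType C) (f : U -> W) : Prop :=
  forall (c : C) (u v : U), f (c *: u + v) = c *: f u + f v.

Definition Cfunctional (U : lmodType C) (l : U -> C) : Prop :=
  forall (c : C) (u v : U), l (c *: u + v) = c * l u + l v.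

(* Gamma(E) is the module of sections of a vector bundle:
   finitely generated projective (Serre--Swan). *)
Definition fg_projective (U : lmodType C) : Prop :=
  exists (n : nat) (s : U -> 'rV[C]_n) (r : 'rV[C]_n -> U),
    Clinear s /\ Clinear r /\ forall u, r (s u) = u.

(* symmetric C-bilinear pairing, fiberwise nondegenerate
   (i.e. phi |-> <phi, .> is an isomorphism Gamma(E) ~ Gamma(E^* )) *)
Definition nondeg_sym_pairing (U : lmodType C) (pair : U -> U -> C) : Prop :=
  (forall u v, pair u v = pair v u) /\
  (forall u, Cfunctional (pair u)) /\
  (forall u, (forall v, pair u v = 0) -> u = 0) /\
  (forall l : U -> C, Cfunctional l -> exists u, forall v, pair u v = l v).

Definition anchor (U : lmodType C) (rho : U -> C -> C) : Prop :=
  (forall (c : C) (u v : U) (f : C), rho (c *: u + v) f = c * rho u f + rho v f) /\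
  (forall u (k : K) (f g : C), rho u (k *: f + g) = k *: rho u f + rho u g) /\
  (forall u (f g : C), rho u (f * g) = f * rho u g + rho u f * g).

Definition Kbilinear (U : lmodType C) (br : U -> U -> U) : Prop :=
  (forall (k : K) u v w, br (k%:A *: u + v) w = k%:A *: br u w + br v w) /\
  (forall (k : K) u v w, br w (k%:A *: u + v) = k%:A *: br w u + br w v).

Definition is_D (U : lmodType C) (pair : U -> U -> C) (rho : U -> C -> C)
  (f : C) (Df : U) : Prop := forall phi, pair Df phi = rho phi f.

Definition is_courant (U : lmodType C) (pair : U -> U -> C)
  (br : U -> U -> U) (rho : U -> C -> C) : Prop :=
  fg_projective U /\ nondeg_sym_pairing pair /\ anchor rho /\ Kbilinear br /\
   (* (J) *)
   (forall phi phi1 phi2,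
      br phi (br phi1 phi2) = br phi1 (br phi phi2) + br (br phi phi1) phi2) /\
   (* (L) *)
   (forall phi (f : C) phi', br phi (f *: phi') = rho phi f *: phi' + f *: br phi phi') /\
   (* (S) *)
   (forall phi Dq, is_D pair rho (pair phi phi) Dq -> br phi phi = (2%:R^-1 : K)%:A *: Dq) /\
   (* (I) *)
   (forall phi phi', rho phi (pair phi' phi') = 2%:R * pair (br phi phi') phi').

Definition splitting_setting (U U1 U2 : lmodType C) (pair : U -> U -> C)
  (br : U -> U -> U) (rho : U -> C -> C)
  (i1 : U1 -> U) (i2 : U2 -> U) (p1 : U -> U1) (p2 : U -> U2) : Prop :=
  is_courant pair br rho /\
      (Clinear i1 /\ Clinear i2 /\ Clinear p1 /\ Clinear p2) /\
      ((forall a, p1 (i1 a) = a) /\ (forall b, p2 (i2 b) = b) /\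
      (forall a, p2 (i1 a) = 0) /\ (forall b, p1 (i2 b) = 0) /\
      (forall phi, i1 (p1 phi) + i2 (p2 phi) = phi)) /\
      (* E2 = E1^perp : together with the direct sum this is equivalent *)
      (forall a b, pair (i1 a) (i2 b) = 0) /\
      is_courant (fun a b => pair (i1 a) (i1 b)) (fun a b => p1 (br (i1 a) (i1 b)))
                 (fun a => rho (i1 a)) /\
      is_courant (fun a b => pair (i2 a) (i2 b)) (fun a b => p2 (br (i2 a) (i2 b)))
                 (fun a => rho (i2 a)).

Section Curv.
Variables (U U1 U2 : lmodType C) (br : U -> U -> U)
  (i1 : U1 -> U) (i2 : U2 -> U) (p1 : U -> U1) (p2 : U -> U2).

Definition br1 (a b : U1) : U1 := p1 (br (i1 a) (i1 b)).
Definition br2 (a b : U2) : U2 := p2 (br (i2 a) (i2 b)).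
Definition nabla_to (a : U1) (beta : U2) : U2 := p2 (br (i1 a) (i2 beta)).
Definition nabla_from (beta : U2) (a : U1) : U1 := p1 (br (i2 beta) (i1 a)).

Definition R_to (a b : U1) (alpha : U2) : U2 :=
  nabla_to a (nabla_to b alpha) - nabla_to b (nabla_to a alpha)
  - nabla_to (br1 a b) alpha.
Definition R_from (alpha beta : U2) (a : U1) : U1 :=
  nabla_from alpha (nabla_from beta a) - nabla_from beta (nabla_from alpha a)
  - nabla_from (br2 alpha beta) a.
End Curv.

(* T : (X -> Y -> Z -> W) is a section of  wedge^2 X^* (x) o(Z)  w.r.t. pairing pZ *)
Definition wedge2_o_section (X Z : lmodType C) (pZ : Z -> Z -> C)
  (T : X -> X -> Z -> Z) : Prop :=
  [/\ (forall (c : C) x x' y z, T (c *: x + x') y z = c *: T x y z + T x' y z),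
      (forall (c : C) x y y' z, T x (c *: y + y') z = c *: T x y z + T x y' z),
      (forall (c : C) x y z z', T x y (c *: z + z') = c *: T x y z + T x y z'),
      (forall x y z, T x y z = - T y x z) &
      (forall x y z w, pZ (T x y z) w + pZ z (T x y w) = 0)].

End Courant.

From HB Require Import structures.
From mathcomp Require Import all_boot all_order all_algebra.
From mathcomp Require Import ring.
Import GRing.Theory Num.Theory.
Set Implicit Arguments. Unset Strict Implicit. Unset Printing Implicit Defensive.
Local Open Scope ring_scope.

(* For E = E1 (+) E2 with E2 = E1^perp, the map nabla_a beta = pr2 (a <> beta)
   is an E1-connection on E2: it is C-linear in a because a and beta are
   orthogonal, so a <> beta = - beta <> a; it satisfies the Leibniz rule in
   beta by axiom (L); and it is metric because of the invariance identity
   rho(phi) <u, v> = <phi <> u, v> + <u, phi <> v>, the polarization of (I).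
   Its curvature R(a, b) is then C-linear in alpha (the anchor of E1 is a
   bracket homomorphism), skew in (a, b) (a <>1 b + b <>1 a = pr1 D<a, b>
   by polarizing (S), and D f acts trivially from the left), hence C-linear
   in a and b, and skew-adjoint (differentiate the metric identity twice).

   Throughout, module identities are checked by [ring] after
   embedding them into the idealization C (+) U of the module U. *)

(* The idealization (trivial square-zero extension) C (+) U, with product
   (c, u) (d, v) = (c d, c v + d u): a commutative ring containing C and U, in
   which linear identities between elements of U become ring identities. *)
Section Idealization.
Variables (C : comNzRingType) (U : lmodType C).

Definition idealization : Type := (C * U)%type.
HB.instance Definition _ := GRing.Zmodule.copy idealization (C * U)%type.

Definition ideal_one : idealization := (1, 0).
Definition ideal_mul (x y : idealization) : idealization :=
  (x.1 * y.1, x.1 *: y.2 + y.1 *: x.2).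

Lemma ideal_mulA : associative ideal_mul.
Proof.
move=> [a u] [b v] [c w]; rewrite /ideal_mul /=; congr pair; first by rewrite mulrA.
by rewrite !scalerDr !scalerA !addrA [c * a]mulrC [c * b]mulrC [b * c]mulrC.
Qed.

Lemma ideal_mulC : commutative ideal_mul.
Proof. by move=> [a u] [b v]; rewrite /ideal_mul /= mulrC addrC. Qed.

Lemma ideal_mul1 : left_id ideal_one ideal_mul.
Proof. by move=> [a u]; rewrite /ideal_mul /= mul1r scale1r scaler0 addr0. Qed.

Lemma ideal_mulDl : left_distributive ideal_mul +%R.
Proof.
move=> [a u] [b v] [c w]; rewrite /ideal_mul /=; congr pair; first by rewrite mulrDl.
by rewrite scalerDl scalerDr !addrA; congr (_ + _); rewrite addrAC.
Qed.

Lemma ideal_one_neq0 : ideal_one != 0.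
Proof. by apply/eqP; case=> /eqP; rewrite oner_eq0. Qed.

HB.instance Definition _ := GRing.Zmodule_isComNzRing.Build idealization
  ideal_mulA ideal_mulC ideal_mul1 ideal_mulDl ideal_one_neq0.

Definition inU (x : U) : idealization := (0, x).
Definition inC (c : C) : idealization := (c, 0).

Lemma inUD x y : inU (x + y) = inU x + inU y.
Proof. by rewrite /inU; congr pair; rewrite addr0. Qed.
Lemma inUN x : inU (- x) = - inU x.
Proof. by rewrite /inU; congr pair; rewrite oppr0. Qed.
Lemma inU0 : inU 0 = 0. Proof. by []. Qed.
Lemma inUZ c x : inU (c *: x) = inC c * inU x.
Proof. by rewrite /inU /inC [RHS]/GRing.mul /= /ideal_mul /= mulr0 scale0r addr0. Qed.
Lemma inU_inj x y : inU x = inU y -> x = y. Proof. by case. Qed.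

Lemma inCD a b : inC (a + b) = inC a + inC b.
Proof. by rewrite /inC; congr pair; rewrite addr0. Qed.
Lemma inCN a : inC (- a) = - inC a.
Proof. by rewrite /inC; congr pair; rewrite oppr0. Qed.
End Idealization.

Ltac push_ideal :=
  rewrite ?(inUD, inUN, inU0, inUZ, inCD, inCN).
Ltac module_ring := apply: inU_inj; push_ideal; ring.

Lemma additive0N (V W : zmodType) (h : V -> W) :
  {morph h : x y / x + y} -> h 0 = 0 /\ {morph h : x / - x}.
Proof.
move=> hD; have h0 : h 0 = 0.
  by apply: (@addrI _ (h 0)); rewrite -hD !addr0.
by split=> // x; apply/eqP; rewrite -addr_eq0 -hD addNr h0.
Qed.

Lemma diff_of_eq_eq0 (V : zmodType) (x y z : V) : x = y -> z = x - y -> z = 0.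
Proof. by move=> -> ->; rewrite subrr. Qed.

Section LinearMaps.
Variables (K : numFieldType) (C : comAlgType K).

Lemma ClinD (U W : lmodType C) (f : U -> W) : Clinear f -> {morph f : x y / x + y}.
Proof. by move=> hf x y; have := hf 1 x y; rewrite !scale1r. Qed.
Lemma ClinN (U W : lmodType C) (f : U -> W) : Clinear f -> {morph f : x / - x}.
Proof. by move=> hf; case: (additive0N (ClinD hf)). Qed.
Lemma ClinB (U W : lmodType C) (f : U -> W) : Clinear f -> {morph f : x y / x - y}.
Proof. by move=> hf x y; rewrite ClinD // ClinN. Qed.
Lemma ClinZ (U W : lmodType C) (f : U -> W) : Clinear f -> forall c x, f (c *: x) = c *: f x.
Proof.
move=> hf c x; have := hf c x 0; rewrite !addr0 => ->.
by case: (additive0N (ClinD hf)) => -> _; rewrite addr0.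
Qed.

Lemma CfunD (U : lmodType C) (f : U -> C) : Cfunctional f -> {morph f : x y / x + y}.
Proof. by move=> hf x y; have := hf 1 x y; rewrite scale1r mul1r. Qed.
Lemma Cfun0 (U : lmodType C) (f : U -> C) : Cfunctional f -> f 0 = 0.
Proof. by move=> hf; case: (additive0N (CfunD hf)). Qed.
Lemma CfunB (U : lmodType C) (f : U -> C) : Cfunctional f -> {morph f : x y / x - y}.
Proof. by move=> hf x y; rewrite CfunD //; case: (additive0N (CfunD hf)) => _ ->. Qed.
Lemma CfunZ (U : lmodType C) (f : U -> C) : Cfunctional f -> forall c x, f (c *: x) = c * f x.
Proof. by move=> hf c x; have := hf c x 0; rewrite !addr0 Cfun0 // addr0. Qed.

(* On a finitely generated projective module U, a C-linear functional all of
   whose values annihilate U vanishes: U is a retract of a free module C^n,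
   and the coordinates of s (L y *: x) are L y times those of s x.  This is
   what turns a derivation-valued identity into an identity of functions. *)
Lemma annihilating_functional_eq0 (U : lmodType C) (L : U -> C) :
  fg_projective U -> Cfunctional L -> (forall y (x : U), L y *: x = 0) ->
  forall y, L y = 0.
Proof.
case=> n [s [r [hs [hr hrs]]]] hL hann y.
have L_r v : L (r v) = \sum_(k < n) v 0 k * L (r 'e_k).
  rewrite {1}(row_sum_delta v).
  rewrite (big_morph (fun w => L (r w)) (id1 := 0) (op1 := +%R)); first last.
  - by case: (additive0N (ClinD hr)) => -> _; rewrite Cfun0.
  - by move=> x1 x2 /=; rewrite ClinD // CfunD.
  by apply: eq_bigr => k _; rewrite ClinZ // CfunZ.
rewrite -(hrs y) L_r big1 // => k _.
have : s (L (r 'e_k) *: y) = 0.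
  by rewrite hann; case: (additive0N (ClinD hs)).
rewrite ClinZ // => /(congr1 (fun m : 'rV[C]_n => m 0 k)); rewrite !mxE.
by rewrite mulrC.
Qed.

Lemma half_add_half : ((2%:R^-1 : K)%:A + (2%:R^-1 : K)%:A : C) = 1.
Proof.
rewrite -scalerDl; have two_neq0 : (2%:R : K) != 0 by rewrite pnatr_eq0.
have -> : (2%:R^-1 + 2%:R^-1 : K) = 1 by field.
by rewrite scale1r.
Qed.
End LinearMaps.

Section CourantIdentities.
Variables (K : numFieldType) (C : comAlgType K) (U : lmodType C)
  (pair : U -> U -> C) (br : U -> U -> U) (rho : U -> C -> C).
Hypothesis HC : is_courant pair br rho.

Let fgU : fg_projective U. Proof. by case: HC. Qed.
Let Hpair : nondeg_sym_pairing pair. Proof. by case: HC => _ []. Qed.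
Let Hanchor : anchor rho. Proof. by case: HC => _ [_ []]. Qed.
Let Hbil : Kbilinear br. Proof. by case: HC => _ [_ [_ []]]. Qed.
Let HJ : forall phi phi1 phi2,
  br phi (br phi1 phi2) = br phi1 (br phi phi2) + br (br phi phi1) phi2.
Proof. by case: HC => _ [_ [_ [_ []]]]. Qed.
Let HL : forall phi (f : C) phi',
  br phi (f *: phi') = rho phi f *: phi' + f *: br phi phi'.
Proof. by case: HC => _ [_ [_ [_ [_ []]]]]. Qed.
Let HS : forall phi Dq,
  is_D pair rho (pair phi phi) Dq -> br phi phi = (2%:R^-1 : K)%:A *: Dq.
Proof. by case: HC => _ [_ [_ [_ [_ [_ []]]]]]. Qed.
Let HI : forall phi phi', rho phi (pair phi' phi') = 2%:R * pair (br phi phi') phi'.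
Proof. by case: HC => _ [_ [_ [_ [_ [_ []]]]]]. Qed.

Lemma pair_sym u v : pair u v = pair v u. Proof. by case: Hpair. Qed.
Let pair_fun_r u : Cfunctional (pair u). Proof. by case: Hpair => _ [h _]; apply: h. Qed.
Let pair_fun_l v : Cfunctional (pair^~ v).
Proof. by move=> c x y; rewrite !(pair_sym _ v) pair_fun_r. Qed.
Let rho_fun f : Cfunctional (rho^~ f).
Proof. by case: Hanchor => h _ c u v; rewrite h. Qed.

Lemma pairD_l v : {morph pair^~ v : x y / x + y}. Proof. exact: CfunD (pair_fun_l v). Qed.
Lemma pairB_l v : {morph pair^~ v : x y / x - y}. Proof. exact: CfunB (pair_fun_l v). Qed.
Lemma pairZ_l v c x : pair (c *: x) v = c * pair x v.
Proof. exact: CfunZ (pair_fun_l v) c x. Qed.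
Lemma pairD_r v : {morph pair v : x y / x + y}. Proof. exact: CfunD (pair_fun_r v). Qed.
Lemma pairB_r v : {morph pair v : x y / x - y}. Proof. exact: CfunB (pair_fun_r v). Qed.
Let pair0_l v : pair 0 v = 0. Proof. exact: Cfun0 (pair_fun_l v). Qed.
Let rhoD_l f : {morph rho^~ f : x y / x + y}. Proof. exact: CfunD (rho_fun f). Qed.
Let rhoZ_l f c x : rho (c *: x) f = c * rho x f. Proof. exact: CfunZ (rho_fun f) c x. Qed.

Lemma rhoD_r u : {morph rho u : x y / x + y}.
Proof. by case: Hanchor => _ [h _] x y; have := h u 1 x y; rewrite !scale1r. Qed.
Lemma rho0_r u : rho u 0 = 0. Proof. by case: (additive0N (rhoD_r u)). Qed.
Let rhoM_r u f g : rho u (f * g) = f * rho u g + rho u f * g.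
Proof. by case: Hanchor => _ [_ h]; apply: h. Qed.

Lemma brD_l w : {morph br^~ w : x y / x + y}.
Proof. by case: Hbil => h _ x y; have := h 1 x y w; rewrite !scale1r. Qed.
Lemma brD_r w : {morph br w : x y / x + y}.
Proof. by case: Hbil => _ h x y; have := h 1 x y w; rewrite !scale1r. Qed.
Lemma brB_l w : {morph br^~ w : x y / x - y}.
Proof. by move=> x y; rewrite brD_l; case: (additive0N (brD_l w)) => _ ->. Qed.
Lemma brZ_r w f x : br w (f *: x) = rho w f *: x + f *: br w x. Proof. exact: HL. Qed.

Lemma D_exists g : exists Dg, is_D pair rho g Dg.
Proof. by case: Hpair => _ [_ [_ h]]; apply: h. Qed.

(* Polarization of (S): phi <> psi + psi <> phi = D <phi, psi>. *)
Lemma br_symmetrization phi psi Dq :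
  is_D pair rho (pair phi psi) Dq -> br phi psi + br psi phi = Dq.
Proof.
move=> hq; have [Da hDa] := D_exists (pair phi phi).
have [Db hDb] := D_exists (pair psi psi).
have hs : is_D pair rho (pair (phi + psi) (phi + psi)) (Da + (Dq + Dq) + Db).
  by move=> x; rewrite !pairD_l hDa hDb hq !pairD_r !rhoD_r (pair_sym psi phi); ring.
have := HS hs; rewrite brD_l !brD_r (HS hDa) (HS hDb) => /(congr1 (@inU _ _)) E.
transitivity (((2%:R^-1 : K)%:A + (2%:R^-1 : K)%:A) *: Dq);
  last by rewrite half_add_half scale1r.
apply: inU_inj; push_ideal; move: E; push_ideal => E.
set h := inC U (2%:R^-1 : K)%:A in E *.
apply: (@addrI _ (h * inU Da + h * inU Db)).
transitivity (h * inU Da + inU (br phi psi) + (inU (br psi phi) + h * inU Db)).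
  by ring.
by rewrite E; ring.
Qed.

(* Polarization of (I): the pairing is invariant under phi <> _. *)
Lemma pair_invariance phi u v :
  rho phi (pair u v) = pair (br phi u) v + pair u (br phi v).
Proof.
rewrite (pair_sym u (br phi v)); apply/eqP; rewrite -subr_eq0; apply/eqP.
set X := rho phi (pair u v) - _.
have twiceX : 2%:R * X = 0.
  have E := HI phi (u + v).
  rewrite !(pairD_l, pairD_r, rhoD_r, brD_r) (pair_sym v u) in E.
  by apply: (diff_of_eq_eq0 E); rewrite (HI phi u) (HI phi v) /X; ring.
have -> : X = ((2%:R^-1 : K)%:A + (2%:R^-1 : K)%:A) * X.
  by rewrite half_add_half mul1r.
have -> : ((2%:R^-1 : K)%:A + (2%:R^-1 : K)%:A) * X = (2%:R^-1 : K)%:A * (2%:R * X).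
  by ring.
by rewrite twiceX mulr0.
Qed.

(* The anchor is a morphism of brackets: rho (phi <> psi) = [rho phi, rho psi].
   Expanding (J) on (phi, psi, f x) leaves (rho(phi <> psi) f - [..] f) x = 0. *)
Lemma anchor_bracket_hom phi psi f :
  rho (br phi psi) f = rho phi (rho psi f) - rho psi (rho phi f).
Proof.
apply/eqP; rewrite -subr_eq0; apply/eqP.
pose L psi := rho (br phi psi) f - (rho phi (rho psi f) - rho psi (rho phi f)).
apply: (@annihilating_functional_eq0 _ _ _ L fgU) => [c u v | y x].
  by rewrite /L brD_r brZ_r !rhoD_l !rhoZ_l !rhoD_r !rhoM_r; ring.
have E := HJ phi y (f *: x); rewrite !(brZ_r, brD_r) (HJ phi y x) in E.
apply: (@inU_inj _ U); rewrite inU0.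
apply: (diff_of_eq_eq0 (congr1 (@inU _ _) (esym E))); rewrite /L; push_ideal; ring.
Qed.

Lemma br_gradient_eq0 g Dg x : is_D pair rho g Dg -> br Dg x = 0.
Proof.
move=> hD.
have hDx : is_D pair rho (pair Dg x) (br x Dg).
  move=> y; have := pair_invariance x Dg y.
  rewrite (hD x) (hD y) (hD (br x y)) anchor_bracket_hom => E.
  apply/eqP; rewrite -subr_eq0; apply/eqP; apply: (diff_of_eq_eq0 (esym E)); ring.
by apply: (@addIr _ (br x Dg)); rewrite (br_symmetrization hDx) add0r.
Qed.

Lemma br_orthogonal_skew phi psi : pair phi psi = 0 -> br phi psi = - br psi phi.
Proof.
move=> h0; have hD : is_D pair rho (pair phi psi) 0.
  by move=> x; rewrite h0 pair0_l rho0_r.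
by apply/eqP; rewrite -addr_eq0; apply/eqP; apply: br_symmetrization.
Qed.
End CourantIdentities.

Section SplitConnection.
Variables (K : numFieldType) (C : comAlgType K) (U U1 U2 : lmodType C)
  (pair : U -> U -> C) (br : U -> U -> U) (rho : U -> C -> C)
  (i1 : U1 -> U) (i2 : U2 -> U) (p1 : U -> U1) (p2 : U -> U2).
Hypotheses (HC : is_courant pair br rho)
 (HC1 : is_courant (fun a b => pair (i1 a) (i1 b)) (fun a b => p1 (br (i1 a) (i1 b)))
          (fun a => rho (i1 a)))
 (HC2 : is_courant (fun a b => pair (i2 a) (i2 b)) (fun a b => p2 (br (i2 a) (i2 b)))
          (fun a => rho (i2 a)))
 (Hi1 : Clinear i1) (Hi2 : Clinear i2) (Hp1 : Clinear p1) (Hp2 : Clinear p2)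
 (H11 : forall a, p1 (i1 a) = a) (H22 : forall b, p2 (i2 b) = b)
 (H21 : forall a, p2 (i1 a) = 0)
 (Hsum : forall phi, i1 (p1 phi) + i2 (p2 phi) = phi)
 (Horth : forall a b, pair (i1 a) (i2 b) = 0).

Local Notation nabla := (nabla_to br i1 i2 p2).
Local Notation br1 := (br1 br i1 p1).
Local Notation RT := (R_to br i1 i2 p1 p2).

Lemma nablaD a : {morph nabla a : x y / x + y}.
Proof. by move=> x y; rewrite /nabla_to (ClinD Hi2) (brD_r HC) (ClinD Hp2). Qed.
Lemma nablaB a : {morph nabla a : x y / x - y}.
Proof. by move=> x y; rewrite nablaD; case: (additive0N (nablaD a)) => _ ->. Qed.

Lemma nablaZ a f x : nabla a (f *: x) = rho (i1 a) f *: x + f *: nabla a x.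
Proof. by rewrite /nabla_to (ClinZ Hi2) (brZ_r HC) (ClinD Hp2) !(ClinZ Hp2) H22. Qed.

Lemma nablaD_l x : {morph nabla ^~ x : a a' / a + a'}.
Proof. by move=> a a'; rewrite /nabla_to (ClinD Hi1) (brD_l HC) (ClinD Hp2). Qed.

(* C-linearity in the direction, because i1 a and i2 x are orthogonal. *)
Lemma nablaZ_l g a x : nabla (g *: a) x = g *: nabla a x.
Proof.
rewrite /nabla_to (ClinZ Hi1).
have orth1 : pair (g *: i1 a) (i2 x) = 0 by rewrite (pairZ_l HC) Horth mulr0.
have orth2 : pair (i2 x) (i1 a) = 0 by rewrite (pair_sym HC) Horth.
rewrite (br_orthogonal_skew HC orth1) (brZ_r HC) (br_orthogonal_skew HC orth2).
rewrite (ClinN Hp2) (ClinD Hp2) !(ClinZ Hp2) (ClinN Hp2) H21.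
module_ring.
Qed.

Lemma pair_proj2 z y : pair z (i2 y) = pair (i2 (p2 z)) (i2 y).
Proof. by rewrite -{1}(Hsum z) (pairD_l HC) Horth add0r. Qed.

Lemma nabla_metric a x y : rho (i1 a) (pair (i2 x) (i2 y)) =
  pair (i2 (nabla a x)) (i2 y) + pair (i2 x) (i2 (nabla a y)).
Proof.
rewrite (pair_invariance HC) (pair_proj2 (br (i1 a) (i2 x)) y).
rewrite (pair_sym HC (i2 x) (br (i1 a) (i2 y))) (pair_proj2 (br (i1 a) (i2 y)) x).
by rewrite (pair_sym HC (i2 (p2 _)) (i2 x)).
Qed.

(* nabla vanishes in the direction of the E1-part of a gradient; the
   E2-part p2 (D g) is the gradient of g in the Courant algebroid E2. *)
Lemma nabla_gradient_eq0 g Dg x : is_D pair rho g Dg -> nabla (p1 Dg) x = 0.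
Proof.
move=> hD; rewrite /nabla_to.
have -> : i1 (p1 Dg) = Dg - i2 (p2 Dg) by rewrite -{2}(Hsum Dg) addrK.
rewrite (brB_l HC) (br_gradient_eq0 HC _ hD) sub0r (ClinN Hp2).
have hD2 : is_D (fun a b => pair (i2 a) (i2 b)) (fun a => rho (i2 a)) g (p2 Dg).
  by move=> y /=; rewrite -pair_proj2 hD.
by have /= -> := br_gradient_eq0 HC2 x hD2; rewrite oppr0.
Qed.

Lemma br1_symmetrization a b Dh : is_D pair rho (pair (i1 a) (i1 b)) Dh ->
  br1 a b + br1 b a = p1 Dh.
Proof. by move=> hD; rewrite /br1 -(ClinD Hp1) (br_symmetrization HC hD). Qed.

Lemma curvatureZ_mid c a b b' z : RT a (c *: b + b') z = c *: RT a b z + RT a b' z.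
Proof.
have br1_lin : br1 a (c *: b + b') = rho (i1 a) c *: b + c *: br1 a b + br1 a b'.
  by rewrite /br1 (ClinD Hi1) (ClinZ Hi1) (brD_r HC) (brZ_r HC) !(ClinD Hp1)
       !(ClinZ Hp1) H11.
rewrite /R_to br1_lin !(nablaD_l, nablaZ_l, nablaD, nablaZ, nablaB).
module_ring.
Qed.

(* C-linearity in alpha uses that the anchor of E1 is a bracket morphism. *)
Lemma curvatureZ_right c a b z z' : RT a b (c *: z + z') = c *: RT a b z + RT a b z'.
Proof.
rewrite /R_to !(nablaD, nablaZ) (anchor_bracket_hom HC1 a b c) /=.
module_ring.
Qed.

Lemma curvature_skew a b z : RT a b z = - RT b a z.
Proof.
have [Dh hD] := D_exists HC (pair (i1 a) (i1 b)).
apply/eqP; rewrite -addr_eq0; apply/eqP.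
transitivity (- nabla (br1 a b + br1 b a) z); first by rewrite nablaD_l /R_to; module_ring.
by rewrite (br1_symmetrization hD) (nabla_gradient_eq0 _ hD) oppr0.
Qed.

Lemma curvatureZ_left c a a' b z : RT (c *: a + a') b z = c *: RT a b z + RT a' b z.
Proof.
rewrite (curvature_skew (c *: a + a')) curvatureZ_mid.
rewrite (curvature_skew b a) (curvature_skew b a').
module_ring.
Qed.

(* Skew-adjointness: expand rho([a, b]_1) <x, y> by nabla_metric twice. *)
Lemma curvature_skew_adjoint a b x y :
  pair (i2 (RT a b x)) (i2 y) + pair (i2 x) (i2 (RT a b y)) = 0.
Proof.
have E := nabla_metric (br1 a b) x y.
rewrite (anchor_bracket_hom HC1) /= (nabla_metric b x y) (nabla_metric a x y) in E.
rewrite !(rhoD_r HC) in E.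
rewrite (nabla_metric a (nabla b x)) (nabla_metric a x (nabla b y)) in E.
rewrite (nabla_metric b (nabla a x)) (nabla_metric b x (nabla a y)) in E.
rewrite /R_to !(ClinB Hi2) !(pairB_l HC) !(pairB_r HC).
by apply: (diff_of_eq_eq0 E); ring.
Qed.

Lemma curvature_section : wedge2_o_section (fun a b => pair (i2 a) (i2 b)) RT.
Proof.
split.
- exact: curvatureZ_left.
- exact: curvatureZ_mid.
- exact: curvatureZ_right.
- exact: curvature_skew.
- exact: curvature_skew_adjoint.
Qed.
End SplitConnection.

Theorem mainTheorem4 (K : numFieldType) (C : comAlgType K) (U U1 U2 : lmodType C)
  (pair : U -> U -> C) (br : U -> U -> U) (rho : U -> C -> C)
  (i1 : U1 -> U) (i2 : U2 -> U) (p1 : U -> U1) (p2 : U -> U2) :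
  splitting_setting pair br rho i1 i2 p1 p2 ->
  wedge2_o_section (fun a b => pair (i2 a) (i2 b)) (R_to br i1 i2 p1 p2) /\
  wedge2_o_section (fun a b => pair (i1 a) (i1 b)) (R_from br i1 i2 p1 p2).
Proof.
case=> HC [[Hi1 [Hi2 [Hp1 Hp2]]] [[H11 [H22 [H21 [H12 Hsum]]]] [Horth [HC1 HC2]]]].
split; first exact: (curvature_section HC HC1 HC2 Hi1 Hi2 Hp1 Hp2 H11 H22 H21 Hsum Horth).
(* R_from is R_to for the swapped splitting E = E2 (+) E1 *)
have Hsum' phi : i2 (p2 phi) + i1 (p1 phi) = phi by rewrite addrC Hsum.
have Horth' a b : pair (i2 a) (i1 b) = 0 by rewrite (pair_sym HC) Horth.
exact: (curvature_section HC HC2 HC1 Hi2 Hi1 Hp2 Hp1 H22 H11 H12 Hsum' Horth').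
Qed.
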